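(* Let $\mathcal S$ be a trajectory set satisfying (LOP) and (K). Then there is no generalized portfolio which is an arbitrage with respect to the $\|\cdot\|$-null sets.
   Context: Fix $s_0\in\mathbb R$. A trajectory set is any set $\mathcal S$ of real sequences $S=(S_j)_{j\in\mathbb N_0}$ with $S_0=s_0$. A simple portfolio $(V,n,H)$ consists of $V\in\mathbb R$, $n\in\mathbb N$ and nonanticipating functions $H_i:\mathcal S\to\mathbb R$, $0\le i\le n-1$ (i.e. $H_i(S)=h_i(S_0,\dots,S_i)$ for some arbitrary $h_i:\mathbb R^{i+1}\to\mathbb R$). Its wealth is $\Pi^{V,n,H}_j(S)=V+\sum_{i=0}^{\min\{j,n\}-1}H_i(S)(S_{i+1}-S_i)$ and $\Pi^{V,n,H}_\infty:=\Pi^{V,n,H}_n$; it is positive if $V\ge0$ and $\Pi^{V,n,H}_\infty\ge0$ on $\mathcal S$. A generalized portfolio is a sequence $(V_m,n_m,H_m)_{m\in\mathbb N_0}$ of simple portfolios, positive for every $m\ge1$; it is a positive generalized portfolio if moreover $\Pi^{V_0,n_0,H_0}_j\equiv0$ for all $j$. A map $f:\mathcal S\to[-\infty,+\infty]$ is superhedged with initial endowment $V=\sum_{m=0}^\infty V_m$ by such a portfolio if $f\le\sum_{m=0}^\infty\Pi^{V_m,n_m,H_m}_\infty$ on $\mathcal S$. For $f\ge0$, $\bar I(f)$ is the infimum of initial endowments of positive generalized portfolios superhedging $f$. Let $\mathcal E=\{\Pi^{V,n,H}_\infty\}$ over all simple portfolios. (LOP): whenever two simple portfolios have equal terminal wealth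 $\Pi_\infty$ at every $S\in\mathcal S$, their initial endowments coincide; under (LOP), $I:\mathcal E\to\mathbb R$, $I(\Pi^{V,n,H}_\infty)=V$, is well defined. (K): $I(f)+\bar I(f^-)\le\bar I(f^+)$ for every $f\in\mathcal E$ ($f^\pm$ positive/negative parts). Define $\|f\|:=\bar I(|f|)$; a null set is $A\subseteq\mathcal S$ with $\|\mathbf 1_A\|=0$. A generalized portfolio $(V_m,n_m,H_m)_{m\in\mathbb N_0}$ is an arbitrage with respect to the $\|\cdot\|$-null sets if $\sum_{m=0}^\infty V_m=0$, the set $\{S:\sum_{m=0}^\infty\Pi^{V_m,n_m,H_m}_\infty(S)<0\}$ is a null set, and the set $\{S:\sum_{m=0}^\infty\Pi^{V_m,n_m,H_m}_\infty(S)>0\}$ is not a null set. *)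

From Stdlib Require Import Reals List Arith ClassicalEpsilon.
From Coquelicot Require Import Coquelicot.
Open Scope R_scope.

Definition traj := nat -> R.

Definition trajectory_set (s0 : R) (Sset : traj -> Prop) : Prop :=
  forall w, Sset w -> w 0%nat = s0.

(* A simple portfolio (V, n, H): V real, n in N = {1,2,...}, and
   H_i(S) = h_i(S_0, ..., S_i) for arbitrary h_i : R^{i+1} -> R
   (the argument (S_0,...,S_i) is encoded as a list of length i+1). *)
Record simple_portfolio := {
  spV : R;
  spn : nat;
  spn_pos : (1 <= spn)%nat;
  sph : nat -> list R -> R
}.

Definition spH (p : simple_portfolio) (i : nat) (w : traj) : R :=
  sph p i (map w (seq 0 (i + 1))).

Fixpoint gains (p : simple_portfolio) (w : traj) (k : nat) : R :=
  match k with
  | O => 0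
  | Datatypes.S k' => gains p w k' + spH p k' w * (w (k' + 1)%nat - w k')
  end.

Definition wealth (p : simple_portfolio) (j : nat) (w : traj) : R :=
  spV p + gains p w (Nat.min j (spn p)).

Definition wealth_inf (p : simple_portfolio) (w : traj) : R :=
  wealth p (spn p) w.

Definition positive_sp (Sset : traj -> Prop) (p : simple_portfolio) : Prop :=
  0 <= spV p /\ forall w, Sset w -> 0 <= wealth_inf p w.

Definition series_Rbar (u : nat -> R) : Rbar :=
  Lim_seq (fun N => sum_f_R0 u N).

Definition generalized_portfolio (Sset : traj -> Prop)
  (P : nat -> simple_portfolio) : Prop :=
  forall m, (1 <= m)%nat -> positive_sp Sset (P m).

Definition positive_generalized_portfolio (Sset : traj -> Prop)
  (P : nat -> simple_portfolio) : Prop :=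
  generalized_portfolio Sset P /\
  forall j w, Sset w -> wealth (P 0%nat) j w = 0.

Definition initial_endowment (P : nat -> simple_portfolio) : Rbar :=
  series_Rbar (fun m => spV (P m)).

Definition total_wealth (P : nat -> simple_portfolio) (w : traj) : Rbar :=
  series_Rbar (fun m => wealth_inf (P m) w).

Definition superhedges (Sset : traj -> Prop) (f : traj -> Rbar)
  (P : nat -> simple_portfolio) : Prop :=
  forall w, Sset w -> Rbar_le (f w) (total_wealth P w).

Definition Ibar (Sset : traj -> Prop) (f : traj -> Rbar) : Rbar :=
  Rbar_glb (fun v => exists P, positive_generalized_portfolio Sset P /\
                        superhedges Sset f P /\ initial_endowment P = v).

Definition LOP (Sset : traj -> Prop) : Prop :=
  forall p q : simple_portfolio,
    (forall w, Sset w -> wealth_inf p w = wealth_inf q w) -> spV p = spV q.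

(* (K): for f = Pi_infty^{V,n,H} in E, I(f) = V and
   I(f) + \bar I(f^-) <= \bar I(f^+). *)
Definition condK (Sset : traj -> Prop) : Prop :=
  forall p : simple_portfolio,
    Rbar_le (Rbar_plus (Finite (spV p))
               (Ibar Sset (fun w => Finite (Rmax (- wealth_inf p w) 0))))
            (Ibar Sset (fun w => Finite (Rmax (wealth_inf p w) 0))).

Definition norm (Sset : traj -> Prop) (f : traj -> Rbar) : Rbar :=
  Ibar Sset (fun w => Rbar_abs (f w)).

Definition indicator (A : traj -> Prop) (w : traj) : Rbar :=
  Finite (match excluded_middle_informative (A w) with
          | left _ => 1 | right _ => 0 end).

Definition null_set (Sset : traj -> Prop) (A : traj -> Prop) : Prop :=
  norm Sset (indicator A) = Finite 0.

Definition arbitrage_null (Sset : traj -> Prop)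
  (P : nat -> simple_portfolio) : Prop :=
  generalized_portfolio Sset P /\
  initial_endowment P = Finite 0 /\
  null_set Sset (fun w => Sset w /\ Rbar_lt (total_wealth P w) (Finite 0)) /\
  ~ null_set Sset (fun w => Sset w /\ Rbar_lt (Finite 0) (total_wealth P w)).

From Pilot Require Import Defs.
From Stdlib Require Import Reals Lra Lia ClassicalEpsilon FunctionalExtensionality.
From Coquelicot Require Import Coquelicot.
Open Scope R_scope.

(* Suppose P is an arbitrage with respect to null sets and let X_n be the terminal wealth
   of its first n portfolios. Selling n copies of these costs -n (V_0 + ... + V_(n-1)),
   which is >= 0 because the later endowments are >= 0 and all of them sum to 0, and
   that short position is superhedged, for the same price plus epsilon, by n copies of
   the remaining portfolios (which cover -n X_n wherever the total wealth is >= 0)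
   together with a cheap hedge that is infinite on the null set where the total wealth
   is negative. Condition (K) then says that the gain (n X_n)^+ has superhedging price
   0. Stacking hedges of these gains with prices eps 2^(-n-1) into a single generalized
   portfolio, every trajectory with positive total wealth is eventually covered by 1,
   since n X_n -> +oo there; so the set of such trajectories is null. *)

Fixpoint rsum (u : nat -> R) (n : nat) : R :=
  match n with O => 0 | S n => rsum u n + u n end.

Lemma rsum_sum_f_R0 u N : sum_f_R0 u N = rsum u (S N).
Proof. induction N as [|N IH]; simpl in *; [lra | rewrite IH; reflexivity]. Qed.

Lemma rsum_ext u v n : (forall i, (i < n)%nat -> u i = v i) -> rsum u n = rsum v n.
Proof.
  induction n as [|n IH]; intros Huv; simpl; [reflexivity|].
  rewrite IH by (intros; apply Huv; lia). rewrite (Huv n) by lia. reflexivity.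
Qed.

Lemma rsum_le u v n : (forall i, (i < n)%nat -> u i <= v i) -> rsum u n <= rsum v n.
Proof.
  induction n as [|n IH]; intros Huv; simpl; [lra|].
  pose proof (IH ltac:(intros; apply Huv; lia)). pose proof (Huv n ltac:(lia)). lra.
Qed.

Lemma rsum_const c n : rsum (fun _ => c) n = INR n * c.
Proof. induction n as [|n IH]; simpl rsum; [simpl; ring | rewrite IH, S_INR; ring]. Qed.

Lemma rsum_nonneg u n : (forall i, (i < n)%nat -> 0 <= u i) -> 0 <= rsum u n.
Proof.
  intros Hu. replace 0 with (rsum (fun _ => 0) n) by (rewrite rsum_const; ring).
  now apply rsum_le.
Qed.

Lemma rsum_le_mono u n m :
  (n <= m)%nat -> (forall i, (n <= i)%nat -> 0 <= u i) -> rsum u n <= rsum u m.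
Proof.
  intros Hnm Hu. induction Hnm as [|m Hnm IH]; simpl; [lra|].
  pose proof (Hu m Hnm). lra.
Qed.

Lemma rsum_plus u v n : rsum (fun i => u i + v i) n = rsum u n + rsum v n.
Proof. induction n as [|n IH]; simpl; lra. Qed.

Lemma rsum_scal c u n : rsum (fun i => c * u i) n = c * rsum u n.
Proof. induction n as [|n IH]; simpl; [ring | rewrite IH; ring]. Qed.

Lemma rsum_add u a n : rsum u (a + n) = rsum u a + rsum (fun i => u (a + i)%nat) n.
Proof.
  induction n as [|n IH]; simpl.
  - rewrite Nat.add_0_r. ring.
  - rewrite Nat.add_succ_r. simpl. rewrite IH. ring.
Qed.

Lemma rsum_succ_shift u n : rsum u (S n) = u 0%nat + rsum (fun i => u (S i)) n.
Proof. rewrite <- Nat.add_1_l, rsum_add. simpl. ring. Qed.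

Lemma rsum_geometric_le a n : 0 <= a -> rsum (fun j => a / 2 ^ S j) n <= a.
Proof.
  intros Ha.
  assert (Hsum : rsum (fun j => a / 2 ^ S j) n = a - a / 2 ^ n).
  { induction n as [|n IH]; [simpl; field|]. cbn [rsum].
    rewrite IH. pose proof (pow_lt 2 n ltac:(lra)). simpl. field. lra. }
  rewrite Hsum. pose proof (pow_lt 2 n ltac:(lra)).
  assert (0 <= a / 2 ^ n) by (apply Rdiv_le_0_compat; lra). lra.
Qed.

Lemma rsum_antidiagonal (c : nat -> nat -> R) T :
  rsum (fun n => rsum (fun k => c k (n - S k)%nat) n) T =
  rsum (fun k => rsum (c k) (T - S k)) T.
Proof.
  induction T as [|T IH]; [reflexivity|].
  cbn [rsum]. rewrite IH, Nat.sub_diag. cbn [rsum Nat.sub].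
  rewrite Rplus_0_r, <- rsum_plus. apply rsum_ext. intros k Hk.
  replace (T - k)%nat with (S (T - S k)) by lia. reflexivity.
Qed.

Lemma rsum_rect_le_antidiagonal (c : nat -> nat -> R) K M T :
  (forall k m, 0 <= c k m) -> (K + M <= T)%nat ->
  rsum (fun k => rsum (c k) M) K <= rsum (fun n => rsum (fun k => c k (n - S k)%nat) n) T.
Proof.
  intros Hc HT. rewrite rsum_antidiagonal.
  apply Rle_trans with (rsum (fun k => rsum (c k) (T - S k)) K).
  - apply rsum_le. intros k Hk. apply rsum_le_mono; [lia | auto].
  - apply rsum_le_mono; [lia|]. intros; apply rsum_nonneg; auto.
Qed.

Lemma rsum_antidiagonal_le_square (c : nat -> nat -> R) T :
  (forall k m, 0 <= c k m) ->
  rsum (fun n => rsum (fun k => c k (n - S k)%nat) n) T <= rsum (fun k => rsum (c k) T) T.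
Proof.
  intros Hc. rewrite rsum_antidiagonal.
  apply rsum_le. intros k _. apply rsum_le_mono; [lia | auto].
Qed.

Lemma series_Rbar_rsum u : series_Rbar u = Lim_seq (fun N => rsum u (S N)).
Proof. apply Lim_seq_ext. intros; apply rsum_sum_f_R0. Qed.

Lemma rsum_le_series_Rbar u n :
  (forall m, (1 <= m)%nat -> 0 <= u m) -> Rbar_le (rsum u (S n)) (series_Rbar u).
Proof.
  intros Hu. rewrite series_Rbar_rsum, <- (Lim_seq_const (rsum u (S n))).
  apply Lim_seq_le_loc. exists n. intros k Hk.
  apply rsum_le_mono; [lia|]. intros; apply Hu; lia.
Qed.

Lemma series_Rbar_le u (y : Rbar) :
  (forall n, Rbar_le (rsum u (S n)) y) -> Rbar_le (series_Rbar u) y.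
Proof.
  intros Hu. destruct y as [y| |]; [| now destruct (series_Rbar u) | now specialize (Hu 0%nat)].
  rewrite series_Rbar_rsum, <- (Lim_seq_const y).
  apply Lim_seq_le_loc. exists 0%nat. intros n _. apply Hu.
Qed.

Lemma series_Rbar_gt u (r : R) : Rbar_lt r (series_Rbar u) -> exists n, r < rsum u (S n).
Proof.
  intros Hr. apply NNPP. intros Hno. apply (Rbar_lt_not_le _ _ Hr).
  apply series_Rbar_le. intros n. apply Rnot_lt_le. intros Hn. eauto.
Qed.

Definition sp_cash (v : R) : simple_portfolio :=
  {| spV := v; spn := 1; spn_pos := le_n 1; sph := fun _ _ => 0 |}.

(* Strategies are switched off beyond their own horizon, so that each summand keeps
   its terminal wealth. *)
Definition sp_add (p q : simple_portfolio) : simple_portfolio :=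
  {| spV := spV p + spV q;
     spn := Nat.max (spn p) (spn q);
     spn_pos := Nat.le_trans _ _ _ (spn_pos p) (Nat.le_max_l _ _);
     sph := fun i l => (if Nat.ltb i (spn p) then sph p i l else 0) +
                       (if Nat.ltb i (spn q) then sph q i l else 0) |}.

Definition sp_scale (c : R) (p : simple_portfolio) : simple_portfolio :=
  {| spV := c * spV p; spn := spn p; spn_pos := spn_pos p;
     sph := fun i l => c * sph p i l |}.

Fixpoint sp_sum (f : nat -> simple_portfolio) (n : nat) : simple_portfolio :=
  match n with O => sp_cash 0 | S n => sp_add (sp_sum f n) (f n) end.

Lemma gains_rsum p w k : gains p w k = rsum (fun i => spH p i w * (w (i + 1)%nat - w i)) k.
Proof. induction k as [|k IH]; simpl; [reflexivity | now rewrite IH]. Qed.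

Lemma gains_min p w k :
  gains p w (Nat.min k (spn p)) =
  rsum (fun i => (if Nat.ltb i (spn p) then spH p i w else 0) * (w (i + 1)%nat - w i)) k.
Proof.
  induction k as [|k IH]; [reflexivity|]. cbn [rsum]. rewrite <- IH.
  destruct (Nat.ltb_spec k (spn p)).
  - replace (Nat.min (S k) (spn p)) with (S k) by lia.
    replace (Nat.min k (spn p)) with k by lia. reflexivity.
  - replace (Nat.min (S k) (spn p)) with (Nat.min k (spn p)) by lia. ring.
Qed.

Lemma wealth_sp_cash v j w : wealth (sp_cash v) j w = v.
Proof.
  unfold wealth. rewrite gains_rsum, (rsum_ext _ (fun _ => 0)), rsum_const; [simpl; ring|].
  intros; unfold spH; simpl; ring.
Qed.

Lemma wealth_inf_sp_cash v w : wealth_inf (sp_cash v) w = v.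
Proof. apply wealth_sp_cash. Qed.

Lemma wealth_inf_add p q w : wealth_inf (sp_add p q) w = wealth_inf p w + wealth_inf q w.
Proof.
  unfold wealth_inf, wealth. cbn [spV spn sp_add]. rewrite !Nat.min_id.
  set (n := Nat.max (spn p) (spn q)).
  replace (spn p) with (Nat.min n (spn p)) by lia.
  replace (spn q) with (Nat.min n (spn q)) by lia.
  rewrite gains_min, (gains_min q), gains_rsum.
  enough (Hsplit : rsum (fun i => spH (sp_add p q) i w * (w (i + 1)%nat - w i)) n =
          rsum (fun i => (if Nat.ltb i (spn p) then spH p i w else 0) * (w (i + 1)%nat - w i) +
                         (if Nat.ltb i (spn q) then spH q i w else 0) * (w (i + 1)%nat - w i)) n)
    by (rewrite Hsplit, rsum_plus; ring).
  apply rsum_ext. intros i _. unfold spH. simpl.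
  destruct (Nat.ltb i (spn p)), (Nat.ltb i (spn q)); ring.
Qed.

Lemma wealth_inf_scale c p w : wealth_inf (sp_scale c p) w = c * wealth_inf p w.
Proof.
  unfold wealth_inf, wealth. rewrite !gains_rsum. cbn [spV spn sp_scale].
  rewrite Rmult_plus_distr_l, <- rsum_scal. f_equal.
  apply rsum_ext. intros; unfold spH; simpl; ring.
Qed.

Lemma wealth_inf_sp_sum f n w : wealth_inf (sp_sum f n) w = rsum (fun k => wealth_inf (f k) w) n.
Proof.
  induction n as [|n IH]; simpl sp_sum.
  - apply wealth_inf_sp_cash.
  - rewrite wealth_inf_add, IH. reflexivity.
Qed.

Lemma spV_sp_sum f n : spV (sp_sum f n) = rsum (fun k => spV (f k)) n.
Proof. induction n as [|n IH]; simpl; [reflexivity | now rewrite IH]. Qed.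

Lemma LOP_inhabited Sset : LOP Sset -> exists w, Sset w.
Proof.
  intros HLOP. apply NNPP. intros Hempty.
  enough (spV (sp_cash 0) = spV (sp_cash 1)) by (simpl in *; lra).
  apply HLOP. intros w Hw. exfalso. eauto.
Qed.

Definition partial_wealth (P : nat -> simple_portfolio) (n : nat) (w : traj) : R :=
  rsum (fun m => wealth_inf (P m) w) n.

Definition partial_endowment (P : nat -> simple_portfolio) (n : nat) : R :=
  rsum (fun m => spV (P m)) n.

(* Row [k] of [Q] contributes its portfolio number [n - 1 - k] to the [n]-th combined
   portfolio, so that every pair [(k, m)] is visited exactly once. *)
Definition diag (Q : nat -> nat -> simple_portfolio) (n : nat) : simple_portfolio :=
  sp_sum (fun k => Q k (n - S k)%nat) n.

(* The leading zero position is the one a positive generalized portfolio starts with. *)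
Definition scaled_tail (c : R) (P : nat -> simple_portfolio) (n : nat) (m : nat)
  : simple_portfolio :=
  match m with O => sp_cash 0 | S m => sp_scale c (P (n + m)%nat) end.

Lemma Rbar_le_of_le_minus_eps (x : R) (y : Rbar) :
  (forall e, 0 < e -> Rbar_le (x - e) y) -> Rbar_le x y.
Proof.
  intros H. destruct y as [y| |]; simpl; auto.
  - apply Rnot_lt_le. intros C. specialize (H ((x - y) / 2) ltac:(lra)). simpl in H. lra.
  - exact (H 1 Rlt_0_1).
Qed.

Lemma Rbar_eq_p_infty_of_ge (y : Rbar) : (forall r : R, Rbar_le r y) -> y = p_infty.
Proof.
  intros H. destruct y as [y| |]; [| reflexivity | destruct (H 0)].
  specialize (H (y + 1)). simpl in H. lra.
Qed.

Lemma indicator_in A w : A w -> indicator A w = Finite 1.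
Proof. intros HA. unfold indicator. now destruct (excluded_middle_informative (A w)). Qed.

Lemma indicator_notin A w : ~ A w -> indicator A w = Finite 0.
Proof. intros HA. unfold indicator. now destruct (excluded_middle_informative (A w)). Qed.

Section Superhedging.

Variable Sset : traj -> Prop.
(* Only the wealth of [P 0] on some trajectory forces its endowment to be 0. *)
Variable w0 : traj.
Hypothesis Sset_w0 : Sset w0.

Notation PGP := (positive_generalized_portfolio Sset).

Lemma PGP_cash0 : PGP (fun _ => sp_cash 0).
Proof.
  split; [| intros; apply wealth_sp_cash].
  intros m _. split; [simpl; lra |]. intros w _. rewrite wealth_inf_sp_cash. lra.
Qed.

Lemma PGP_spV_nonneg P m : PGP P -> 0 <= spV (P m).
Proof.
  intros [HP H0]. destruct m as [|m].
  - replace (spV (P 0%nat)) with (wealth (P 0%nat) 0 w0) by (unfold wealth; simpl; ring).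
    rewrite H0 by assumption. lra.
  - apply (HP (S m)). lia.
Qed.

Lemma PGP_wealth_inf_nonneg P m w : PGP P -> Sset w -> 0 <= wealth_inf (P m) w.
Proof.
  intros [HP H0] Hw. destruct m as [|m].
  - unfold wealth_inf. rewrite H0 by assumption. lra.
  - apply (HP (S m)); [lia | assumption].
Qed.

Lemma PGP_partial_wealth_mono P w M M' :
  PGP P -> Sset w -> (M <= M')%nat -> partial_wealth P M w <= partial_wealth P M' w.
Proof. intros HP Hw HM. apply rsum_le_mono; auto using PGP_wealth_inf_nonneg. Qed.

Lemma PGP_total_wealth_nonneg P w : PGP P -> Sset w -> Rbar_le 0 (total_wealth P w).
Proof.
  intros HP Hw. eapply Rbar_le_trans; [| apply (rsum_le_series_Rbar _ 0)].
  - apply rsum_nonneg. intros; now apply PGP_wealth_inf_nonneg.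
  - intros; now apply PGP_wealth_inf_nonneg.
Qed.

Lemma PGP_initial_endowment_nonneg P : PGP P -> Rbar_le 0 (initial_endowment P).
Proof.
  intros HP. eapply Rbar_le_trans; [| apply (rsum_le_series_Rbar _ 0)].
  - apply rsum_nonneg. intros; now apply PGP_spV_nonneg.
  - intros; now apply PGP_spV_nonneg.
Qed.

Lemma PGP_partial_endowment_le P (e : R) M :
  PGP P -> Rbar_le (initial_endowment P) e -> partial_endowment P M <= e.
Proof.
  intros HP He. destruct M as [|M].
  - exact (Rbar_le_trans _ _ _ (PGP_initial_endowment_nonneg P HP) He).
  - refine (Rbar_le_trans _ _ _ (rsum_le_series_Rbar _ M _) He).
    intros; now apply PGP_spV_nonneg.
Qed.

Lemma Ibar_le_initial_endowment f P :
  PGP P -> superhedges Sset f P -> Rbar_le (Ibar Sset f) (initial_endowment P).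
Proof.
  intros HP Hf. apply (proj1 (proj2_sig (Rbar_ex_glb _))). now exists P.
Qed.

Lemma Ibar_nonneg f : Rbar_le 0 (Ibar Sset f).
Proof.
  apply (proj2 (proj2_sig (Rbar_ex_glb _))).
  intros v [P [HP [_ <-]]]. now apply PGP_initial_endowment_nonneg.
Qed.

Lemma Ibar_lt_hedge f (a : R) :
  Rbar_lt (Ibar Sset f) a ->
  exists P, PGP P /\ superhedges Sset f P /\ Rbar_lt (initial_endowment P) a.
Proof.
  intros Ha. apply NNPP. intros Hno. apply (Rbar_lt_not_le _ _ Ha).
  apply (proj2 (proj2_sig (Rbar_ex_glb _))). intros v [P [HP [Hf <-]]].
  destruct (Rbar_lt_le_dec (initial_endowment P) a) as [Hlt|]; [exfalso; eauto | assumption].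
Qed.

Lemma Ibar_eq0 f : (forall e, 0 < e -> Rbar_le (Ibar Sset f) e) -> Ibar Sset f = 0.
Proof.
  intros Hf. pose proof (Ibar_nonneg f) as H0.
  destruct (Ibar Sset f) as [y| |]; simpl in H0 |- *; try contradiction.
  - f_equal. apply Rle_antisym; [| assumption].
    apply Rnot_lt_le. intros Hy. specialize (Hf (y / 2) ltac:(lra)). simpl in Hf. lra.
  - destruct (Hf 1 Rlt_0_1).
Qed.

Section Diagonal.

Variable Q : nat -> nat -> simple_portfolio.
Hypothesis Q_PGP : forall k, PGP (Q k).

Lemma PGP_diag : PGP (diag Q).
Proof.
  split.
  - intros m _. split.
    + unfold diag. rewrite spV_sp_sum. apply rsum_nonneg.
      intros; now apply PGP_spV_nonneg.
    + intros w Hw. unfold diag. rewrite wealth_inf_sp_sum. apply rsum_nonneg.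
      intros; now apply PGP_wealth_inf_nonneg.
  - intros j w _. apply wealth_sp_cash.
Qed.

Lemma initial_endowment_diag_le (e : nat -> R) (E : R) :
  (forall k, Rbar_le (initial_endowment (Q k)) (e k)) -> (forall K, rsum e K <= E) ->
  Rbar_le (initial_endowment (diag Q)) E.
Proof.
  intros He HE. apply series_Rbar_le. intros n. cbn [Rbar_le].
  rewrite (rsum_ext (fun m => spV (diag Q m)) (fun m => rsum (fun k => spV (Q k (m - S k)%nat)) m))
    by (intros; unfold diag; apply spV_sp_sum).
  eapply Rle_trans; [apply (rsum_antidiagonal_le_square (fun k m => spV (Q k m)))|].
  - intros; now apply PGP_spV_nonneg.
  - eapply Rle_trans; [| apply (HE (S n))]. apply rsum_le. intros k _.
    exact (PGP_partial_endowment_le (Q k) (e k) (S n) (Q_PGP k) (He k)).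
Qed.

Lemma total_wealth_diag_ge_rect w K M :
  Sset w -> Rbar_le (rsum (fun k => partial_wealth (Q k) M w) K) (total_wealth (diag Q) w).
Proof.
  intros Hw. eapply Rbar_le_trans; [| apply (rsum_le_series_Rbar _ (K + M))].
  - cbn [Rbar_le]. rewrite (rsum_ext (fun n => wealth_inf (diag Q n) w) (fun n => rsum (fun k => wealth_inf (Q k (n - S k)%nat) w) n))
      by (intros; unfold diag; apply wealth_inf_sp_sum).
    apply (rsum_rect_le_antidiagonal (fun k m => wealth_inf (Q k m) w)); [|lia].
    intros; now apply PGP_wealth_inf_nonneg.
  - intros; apply PGP_wealth_inf_nonneg; [exact PGP_diag | exact Hw].
Qed.

Lemma total_wealth_diag_ge_row w k :
  Sset w -> Rbar_le (total_wealth (Q k) w) (total_wealth (diag Q) w).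
Proof.
  intros Hw. apply series_Rbar_le. intros n.
  eapply Rbar_le_trans; [| apply (total_wealth_diag_ge_rect w (S k) (S n) Hw)].
  simpl. assert (0 <= rsum (fun k => partial_wealth (Q k) (S n) w) k).
  { apply rsum_nonneg. intros. apply rsum_nonneg. intros; now apply PGP_wealth_inf_nonneg. }
  unfold partial_wealth at 2. simpl. lra.
Qed.

Lemma total_wealth_diag_ge_rows w K (x : nat -> R) :
  Sset w -> (forall k, (k < K)%nat -> Rbar_lt (x k) (total_wealth (Q k) w)) ->
  Rbar_le (rsum x K) (total_wealth (diag Q) w).
Proof.
  intros Hw Hx.
  assert (Hunif : exists M, forall k, (k < K)%nat -> x k <= partial_wealth (Q k) M w).
  { induction K as [|K IH]; [exists 0%nat; intros; lia|].
    destruct IH as [M HM]; [intros; apply Hx; lia|].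
    destruct (series_Rbar_gt _ _ (Hx K ltac:(lia))) as [MK HMK].
    exists (Nat.max M (S MK)). intros k Hk.
    destruct (Nat.eq_dec k K) as [->|].
    - apply Rlt_le, (Rlt_le_trans _ _ _ HMK), (PGP_partial_wealth_mono _ w (S MK)); auto; lia.
    - eapply Rle_trans; [apply HM; lia|]. apply PGP_partial_wealth_mono; auto; lia. }
  destruct Hunif as [M HM].
  eapply Rbar_le_trans; [| apply (total_wealth_diag_ge_rect w K M Hw)].
  now apply rsum_le.
Qed.

End Diagonal.

Lemma hedges_diag_le_of_Ibar0 (f : nat -> traj -> Rbar) (eps : R) :
  0 < eps -> (forall j, Ibar Sset (f j) = 0) ->
  exists Q, (forall j, PGP (Q j) /\ superhedges Sset (f j) (Q j)) /\
            Rbar_le (initial_endowment (diag Q)) eps.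
Proof.
  intros Heps Hf.
  assert (Hhedge : forall j, exists P, PGP P /\ superhedges Sset (f j) P /\
                     Rbar_lt (initial_endowment P) (eps / 2 ^ S j)).
  { intros j. apply Ibar_lt_hedge. rewrite Hf.
    apply Rdiv_lt_0_compat; [lra | apply pow_lt; lra]. }
  exists (fun j => proj1_sig (constructive_indefinite_description _ (Hhedge j))).
  pose proof (fun j => proj2_sig (constructive_indefinite_description _ (Hhedge j))) as HQ.
  cbv beta in HQ. split; [intros j; split; apply HQ|].
  apply (initial_endowment_diag_le _ (fun k => proj1 (HQ k)) (fun j => eps / 2 ^ S j)).
  - intros j. apply Rbar_lt_le, HQ.
  - intros K. apply rsum_geometric_le. lra.
Qed.

Lemma null_set_infinite_hedge A d :
  null_set Sset A -> 0 < d ->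
  exists H, PGP H /\ Rbar_le (initial_endowment H) d /\
            forall w, Sset w -> A w -> total_wealth H w = p_infty.
Proof.
  intros HA Hd.
  destruct (hedges_diag_le_of_Ibar0 (fun _ w => Rbar_abs (indicator A w)) d Hd (fun _ => HA))
    as [Q [HQ Hcost]].
  assert (HQ_PGP : forall k, PGP (Q k)) by (intros; apply HQ).
  exists (diag Q). split; [exact (PGP_diag Q HQ_PGP)|]. split; [exact Hcost|].
  intros w Hw Hw_A. apply Rbar_eq_p_infty_of_ge. intros r.
  destruct (INR_unbounded (2 * r)) as [K HK].
  eapply Rbar_le_trans; [| apply (total_wealth_diag_ge_rows Q HQ_PGP w K (fun _ => 1 / 2) Hw)].
  - rewrite rsum_const. simpl. lra.
  - intros k _. eapply Rbar_lt_le_trans; [| apply (proj2 (HQ k) w Hw)].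
    rewrite indicator_in by assumption. simpl. rewrite Rabs_R1. lra.
Qed.

Section Arbitrage.

Hypothesis K_cond : condK Sset.
Variable P : nat -> simple_portfolio.
Hypothesis P_gp : generalized_portfolio Sset P.
Hypothesis P_costless : initial_endowment P = 0.
Hypothesis P_loss_null : null_set Sset (fun w => Sset w /\ Rbar_lt (total_wealth P w) 0).

Lemma partial_endowment_nonpos n : partial_endowment P n <= 0.
Proof.
  destruct n as [|n]; [apply Rle_refl|].
  pose proof (rsum_le_series_Rbar (fun m => spV (P m)) n) as H.
  unfold initial_endowment in P_costless. rewrite P_costless in H.
  apply H. intros m Hm. apply (P_gp m Hm).
Qed.

Lemma partial_wealth_mono w n n' :
  Sset w -> (1 <= n)%nat -> (n <= n')%nat -> partial_wealth P n w <= partial_wealth P n' w.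
Proof.
  intros Hw Hn Hnn'. apply rsum_le_mono; [assumption|].
  intros i Hi. apply (P_gp i); [lia | assumption].
Qed.

Lemma PGP_scaled_tail c n : 0 <= c -> (1 <= n)%nat -> PGP (scaled_tail c P n).
Proof.
  intros Hc Hn. split; [| intros; apply wealth_sp_cash].
  intros [|m] Hm; [lia|].
  destruct (P_gp (n + m)%nat ltac:(lia)) as [HV HW].
  split; simpl; [now apply Rmult_le_pos|].
  intros w Hw. rewrite wealth_inf_scale. now apply Rmult_le_pos, HW.
Qed.

Lemma partial_wealth_scaled_tail c n m w :
  partial_wealth (scaled_tail c P n) (S m) w =
  c * (partial_wealth P (n + m) w - partial_wealth P n w).
Proof.
  unfold partial_wealth. rewrite rsum_succ_shift, rsum_add. simpl scaled_tail.
  rewrite wealth_inf_sp_cash.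
  rewrite (rsum_ext _ (fun i => c * wealth_inf (P (n + i)%nat) w))
    by (intros; apply wealth_inf_scale).
  rewrite rsum_scal. ring.
Qed.

Lemma partial_endowment_scaled_tail c n m :
  partial_endowment (scaled_tail c P n) (S m) =
  c * (partial_endowment P (n + m) - partial_endowment P n).
Proof.
  unfold partial_endowment. rewrite rsum_succ_shift, rsum_add. simpl.
  rewrite rsum_scal. ring.
Qed.

Lemma initial_endowment_scaled_tail_le c n :
  0 <= c -> Rbar_le (initial_endowment (scaled_tail c P n)) (c * - partial_endowment P n).
Proof.
  intros Hc. apply series_Rbar_le. intros m. cbn [Rbar_le].
  change (partial_endowment (scaled_tail c P n) (S m) <= c * - partial_endowment P n).
  rewrite partial_endowment_scaled_tail.
  pose proof (partial_endowment_nonpos (n + m)). nra.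
Qed.

Lemma total_wealth_scaled_tail_ge c n w :
  0 <= c -> (1 <= n)%nat -> Sset w -> Rbar_le 0 (total_wealth P w) ->
  Rbar_le (c * - partial_wealth P n w) (total_wealth (scaled_tail c P n) w).
Proof.
  intros Hc Hn Hw Htot. apply Rbar_le_of_le_minus_eps. intros e He.
  assert (Hcr : c * - (e / (c + 1)) = - e + e / (c + 1)) by (field; lra).
  assert (He' : 0 < e / (c + 1)) by (apply Rdiv_lt_0_compat; lra).
  set (e' := e / (c + 1)) in *.
  assert (Hr : Rbar_lt (- e') (total_wealth P w)).
  { eapply Rbar_lt_le_trans; [| exact Htot]. simpl. lra. }
  destruct (series_Rbar_gt _ _ Hr) as [m Hm].
  eapply Rbar_le_trans; [| apply (rsum_le_series_Rbar _ (S m))].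
  - cbn [Rbar_le].
    change (c * - partial_wealth P n w - e <= partial_wealth (scaled_tail c P n) (S (S m)) w).
    rewrite partial_wealth_scaled_tail.
    assert (- e' <= partial_wealth P (n + S m) w).
    { apply Rlt_le, (Rlt_le_trans _ _ _ Hm), (partial_wealth_mono w (S m)); auto; lia. }
    nra.
  - intros. apply PGP_wealth_inf_nonneg; [now apply PGP_scaled_tail | exact Hw].
Qed.

Lemma Ibar_short_partial_le n d :
  0 < d ->
  Rbar_le (Ibar Sset (fun w => Finite (Rmax (- INR (S n) * partial_wealth P (S n) w) 0)))
          (INR (S n) * - partial_endowment P (S n) + d).
Proof.
  intros Hd. set (c := INR (S n)). assert (Hc : 0 <= c) by apply pos_INR.
  destruct (null_set_infinite_hedge _ d P_loss_null Hd) as [H [HH [HH_cost HH_inf]]].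
  set (Q := fun k => match k with
                     | 0%nat => scaled_tail c P (S n) | 1%nat => H | _ => fun _ => sp_cash 0 end).
  assert (HQ : forall k, PGP (Q k)).
  { intros [|[|k]]; [apply PGP_scaled_tail; [exact Hc | lia] | exact HH | exact PGP_cash0]. }
  eapply Rbar_le_trans.
  2: { apply (initial_endowment_diag_le Q HQ
                (fun k => match k with 0%nat => c * - partial_endowment P (S n)
                                  | 1%nat => d | _ => 0 end)).
       - intros [|[|k]]; [now apply initial_endowment_scaled_tail_le | exact HH_cost |].
         apply series_Rbar_le. intros m. cbn [Rbar_le].
         rewrite (rsum_ext _ (fun _ => 0)), rsum_const by reflexivity. lra.
       - intros K. pose proof (partial_endowment_nonpos (S n)).
         eapply Rle_trans; [apply (rsum_le_mono _ K (2 + K)); [lia | intros [|[|i]] _; nra]|].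
         rewrite rsum_add. simpl. rewrite rsum_const. lra. }
  apply Ibar_le_initial_endowment; [exact (PGP_diag Q HQ)|].
  intros w Hw. cbv beta.
  destruct (Rle_dec (- c * partial_wealth P (S n) w) 0) as [Hneg | Hpos].
  - rewrite Rmax_right by exact Hneg. exact (PGP_total_wealth_nonneg _ w (PGP_diag Q HQ) Hw).
  - rewrite Rmax_left by lra.
    destruct (Rbar_lt_le_dec (total_wealth P w) 0) as [Hloss | Hgain].
    + eapply Rbar_le_trans; [| apply (total_wealth_diag_ge_row Q HQ w 1 Hw)].
      simpl Q. rewrite (HH_inf w Hw (conj Hw Hloss)). exact I.
    + eapply Rbar_le_trans; [| apply (total_wealth_diag_ge_row Q HQ w 0 Hw)].
      replace (- c * partial_wealth P (S n) w) with (c * - partial_wealth P (S n) w) by ring.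
      apply total_wealth_scaled_tail_ge; auto; lia.
Qed.

Lemma Ibar_partial_gain_eq0 n :
  Ibar Sset (fun w => Finite (Rmax (INR (S n) * partial_wealth P (S n) w) 0)) = 0.
Proof.
  apply Ibar_eq0. intros d Hd.
  set (p := sp_scale (- INR (S n)) (sp_sum P (S n))).
  assert (Hwp : forall w, wealth_inf p w = - INR (S n) * partial_wealth P (S n) w).
  { intros w. unfold p. rewrite wealth_inf_scale, wealth_inf_sp_sum. reflexivity. }
  assert (HVp : spV p = INR (S n) * - partial_endowment P (S n)).
  { unfold p. cbn [spV sp_scale]. rewrite spV_sp_sum. unfold partial_endowment. ring. }
  pose proof (K_cond p) as HK. rewrite HVp in HK.
  replace (fun w => Finite (Rmax (- wealth_inf p w) 0))
    with (fun w => Finite (Rmax (INR (S n) * partial_wealth P (S n) w) 0)) in HK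
    by (apply functional_extensionality; intros w; rewrite Hwp; do 2 f_equal; ring).
  replace (fun w => Finite (Rmax (wealth_inf p w) 0))
    with (fun w => Finite (Rmax (- INR (S n) * partial_wealth P (S n) w) 0)) in HK
    by (apply functional_extensionality; intros w; now rewrite Hwp).
  pose proof (Rbar_le_trans _ _ _ HK (Ibar_short_partial_le n d Hd)) as Hle.
  pose proof (Ibar_nonneg (fun w => Finite (Rmax (INR (S n) * partial_wealth P (S n) w) 0))).
  destruct (Ibar Sset _) as [y| |]; simpl in *; [lra | contradiction | contradiction].
Qed.

Lemma scaled_partial_wealth_gt1 w :
  Sset w -> Rbar_lt 0 (total_wealth P w) ->
  exists n, 1 < INR (S n) * partial_wealth P (S n) w.
Proof.
  intros Hw Hpos. destruct (series_Rbar_gt _ _ Hpos) as [m Hm].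
  change (0 < partial_wealth P (S m) w) in Hm.
  destruct (INR_unbounded (/ partial_wealth P (S m) w)) as [k Hk].
  exists (Nat.max m k).
  assert (Hmono : partial_wealth P (S m) w <= partial_wealth P (S (Nat.max m k)) w)
    by (apply partial_wealth_mono; auto; lia).
  assert (Hk' : INR k <= INR (S (Nat.max m k))) by (apply le_INR; lia).
  set (y := partial_wealth P (S m) w) in *.
  set (a := INR (S (Nat.max m k))) in *.
  assert (1 < a * y).
  { rewrite <- (Rinv_l y) by lra. apply Rmult_lt_compat_r; lra. }
  assert (0 <= a) by (unfold a; apply pos_INR).
  nra.
Qed.

Lemma gain_set_null : null_set Sset (fun w => Sset w /\ Rbar_lt 0 (total_wealth P w)).
Proof.
  unfold null_set, Defs.norm. apply Ibar_eq0. intros eps Heps.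
  destruct (hedges_diag_le_of_Ibar0 _ eps Heps Ibar_partial_gain_eq0) as [Q [HQ Hcost]].
  assert (HQ_PGP : forall k, PGP (Q k)) by (intros; apply HQ).
  eapply Rbar_le_trans; [| exact Hcost].
  apply Ibar_le_initial_endowment; [exact (PGP_diag Q HQ_PGP)|].
  intros w Hw. destruct (classic (Sset w /\ Rbar_lt 0 (total_wealth P w))) as [HA | HA].
  - rewrite indicator_in by exact HA. cbn [Rbar_abs]. rewrite Rabs_R1.
    destruct (scaled_partial_wealth_gt1 w Hw (proj2 HA)) as [n Hn].
    eapply Rbar_le_trans; [| apply (total_wealth_diag_ge_row Q HQ_PGP w n Hw)].
    eapply Rbar_le_trans; [| apply (proj2 (HQ n) w Hw)].
    cbn [Rbar_le]. eapply Rle_trans; [| apply Rmax_l]. lra.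
  - rewrite indicator_notin by exact HA. cbn [Rbar_abs]. rewrite Rabs_R0.
    exact (PGP_total_wealth_nonneg _ w (PGP_diag Q HQ_PGP) Hw).
Qed.

End Arbitrage.

End Superhedging.

Theorem theorem4p5 (s0 : R) (Sset : traj -> Prop) :
  trajectory_set s0 Sset -> LOP Sset -> condK Sset ->
  ~ exists P : nat -> simple_portfolio, arbitrage_null Sset P.
Proof.
  intros _ HLOP HK [P [HP [Hcostless [Hloss Hgain]]]].
  destruct (LOP_inhabited Sset HLOP) as [w0 Hw0].
  exact (Hgain (gain_set_null Sset w0 Hw0 HK P HP Hcostless Hloss)).
Qed.
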